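(* Suppose a set $S\subseteq\mathbb{N}^{\mathbb{N}}$ is defined by some sentence $\forall x\,\exists y\,\phi$ of $\mathscr{L}_{\max}$ and also by some sentence $\exists x\,\forall y\,\psi$ of $\mathscr{L}_{\max}$, where $\phi$ and $\psi$ are quantifier-free. Then $S$ is guessable.
   Context: A function $G:\mathbb{N}^{<\mathbb{N}}\to\{0,1\}$ ($\mathbb{N}^{<\mathbb{N}}$ = finite sequences of naturals) is a guesser for $S\subseteq\mathbb{N}^{\mathbb{N}}$ if for every $f:\mathbb{N}\to\mathbb{N}$ there is $m>0$ such that for all $n>m$, $G(f(0),\ldots,f(n))$ equals $1$ if $f\in S$ and $0$ if $f\notin S$; $S$ is guessable if it has a guesser. The language $\mathscr{L}_{\max}$ is a first-order language extended with ellipses: constant symbols $\mathbf{n}$ (also $\bar n$) for each $n\in\mathbb{N}$; an $n$-ary function symbol $\tilde w$ for each $w:\mathbb{N}^n\to\mathbb{N}$ ($n>0$); an $n$-ary predicate symbol $\tilde p$ for each $p\subseteq\mathbb{N}^n$ ($n>0$); an $\mathbb{N}^{<\mathbb{N}}$-ary function symbol $\tilde G$ for each $G:\mathbb{N}^{<\mathbb{N}}\to\mathbb{N}$ (applicable to any finite number of arguments); a unary function symbol $\mathbf{f}$; and a symbol $\cdots_x$ for each variable $x$. Besides the usual terms, for $\mathbb{N}^{<\mathbb{N}}$-ary $G$, terms $u,v$ and variable $x$, $G(u(\mathbf{0}),\cdots_x,u(v))$ is a term with free variables $(FV(u)\setminus\{x\})\cup FV(v)$. Formulas are built as usual. For $f:\mathbb{N}\to\mathbb{N}$,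 $\mathscr{M}_f$ is the structure on $\mathbb{N}$ interpreting every symbol as the object it names and $\mathbf{f}$ as $f$; terms are evaluated as usual, plus $G(u(\mathbf{0}),\cdots_x,u(v))^{s}=G\big(u(x|\mathbf{0})^{s},\ldots,u(x|\overline{v^{s}})^{s}\big)$ under an assignment $s$, where $u(x|c)$ is substitution of the constant $c$ for $x$ in $u$. A sentence $\phi$ defines $S\subseteq\mathbb{N}^{\mathbb{N}}$ if for every $f:\mathbb{N}\to\mathbb{N}$, $\mathscr{M}_f\models\phi$ iff $f\in S$. *)

From Stdlib Require Import List Arith Fin.
Import ListNotations.

Definition var := nat.

Inductive term : Type :=
| tvar   : var -> term
| tconst : nat -> term
| tfun   : forall n : nat,
    ((Fin.t (S n) -> nat) -> nat) -> (Fin.t (S n) -> term) -> term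
| tG     : (list nat -> nat) -> list term -> term
| tf     : term -> term
| tell   : (list nat -> nat) -> term -> var -> term -> term.
                                                         (* tell G u x v  =  G(u(0), ..._x, u(v)) *)

Inductive formula : Type :=
| fpred : forall n : nat,
    ((Fin.t (S n) -> nat) -> Prop) -> (Fin.t (S n) -> term) -> formula
| feq   : term -> term -> formula
| fnot  : formula -> formula
| fand  : formula -> formula -> formula
| for_  : formula -> formula -> formula
| fimp  : formula -> formula -> formula
| fall  : var -> formula -> formula
| fex   : var -> formula -> formula.

(* Free variables.  In  G(u(0), ..._x, u(v))  the variable x is bound in u
   (but not in v). *)
Fixpoint free_t (x : var) (t : term) : Prop :=
  match t with
  | tvar y => x = y
  | tconst _ => False
  | tfun n w args => exists i : Fin.t (S n), free_t x (args i)
  | tG G args =>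
      (fix go (l : list term) : Prop :=
         match l with
         | [] => False
         | t :: l' => free_t x t \/ go l'
         end) args
  | tf u => free_t x u
  | tell G u y v => (x <> y /\ free_t x u) \/ free_t x v
  end.

Fixpoint free_f (x : var) (phi : formula) : Prop :=
  match phi with
  | fpred n p args => exists i : Fin.t (S n), free_t x (args i)
  | feq t1 t2 => free_t x t1 \/ free_t x t2
  | fnot a => free_f x a
  | fand a b | for_ a b | fimp a b => free_f x a \/ free_f x b
  | fall y a | fex y a => x <> y /\ free_f x a
  end.

Definition sentence (phi : formula) : Prop := forall x, ~ free_f x phi.

Fixpoint qfree (phi : formula) : Prop :=
  match phi with
  | fpred _ _ _ | feq _ _ => True
  | fnot a => qfree a
  | fand a b | for_ a b | fimp a b => qfree a /\ qfree b
  | fall _ _ | fex _ _ => False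
  end.

Definition assignment := var -> nat.
Definition upd (s : assignment) (x : var) (c : nat) : assignment :=
  fun y => if Nat.eqb y x then c else s y.

(* The ellipsis term is evaluated as
   G(u^{s[x:=0]}, ..., u^{s[x:=v^s]}), which is the value of
   G(u(x|0)^s, ..., u(x|\bar{v^s})^s) (substituting a closed constant for x). *)
Fixpoint eval (f : nat -> nat) (s : assignment) (t : term) : nat :=
  match t with
  | tvar y => s y
  | tconst n => n
  | tfun n w args => w (fun i => eval f s (args i))
  | tG G args => G (map (eval f s) args)
  | tf u => f (eval f s u)
  | tell G u x v =>
      G (map (fun i => eval f (upd s x i) u) (seq 0 (S (eval f s v))))
  end.

Fixpoint sat (f : nat -> nat) (s : assignment) (phi : formula) : Prop :=
  match phi with
  | fpred n p args => p (fun i => eval f s (args i))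
  | feq t1 t2 => eval f s t1 = eval f s t2
  | fnot a => ~ sat f s a
  | fand a b => sat f s a /\ sat f s b
  | for_ a b => sat f s a \/ sat f s b
  | fimp a b => sat f s a -> sat f s b
  | fall x a => forall c : nat, sat f (upd s x c) a
  | fex x a => exists c : nat, sat f (upd s x c) a
  end.

(* M_f |= phi for a sentence (assignment irrelevant; we use the zero one). *)
Definition models (f : nat -> nat) (phi : formula) : Prop :=
  sat f (fun _ => 0) phi.

Definition defines (phi : formula) (S : (nat -> nat) -> Prop) : Prop :=
  sentence phi /\ forall f : nat -> nat, models f phi <-> S f.

Definition prefix (f : nat -> nat) (n : nat) : list nat := map f (seq 0 (S n)).

(* Guessers: G : N^{<N} -> {0,1}, with 1 encoded as true and 0 as false. *)
Definition guesser (G : list nat -> bool) (S : (nat -> nat) -> Prop) : Prop :=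
  forall f : nat -> nat, exists m : nat, 0 < m /\
    forall n : nat, m < n -> (G (prefix f n) = true <-> S f).

Definition guessable (S : (nat -> nat) -> Prop) : Prop :=
  exists G : list nat -> bool, guesser G S.

(* Everything quantifier-free in L_max is continuous in f: its value depends on
   finitely many values of f only (for the ellipsis term G(u(0), ..._x, u(v))
   because the number of arguments, the value of v, is itself continuous).
   So S is a countable union of closed sets {f | forall b, P a b f} (from the
   Sigma_2 definition), and so is its complement (from the Pi_2 one).
   Interleave the two families of closed sets into one sequence C_0, C_1, ...
   covering Baire space.  On input (f(0), ..., f(n)) the guesser looks for the
   least index c <= n whose closed set has not yet been refuted by the prefix
   and answers according to which family C_c comes from.  If c_f is the least
   index with f in C_c_f, every smaller index is eventually refuted while c_f
   never is, so the guess stabilises on the right answer. *)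
From Stdlib Require Import List Arith Lia Fin Wf_nat.
From Stdlib Require Import Classical ClassicalDescription
  FunctionalExtensionality.
Import ListNotations.

Definition agree (N : nat) (g f : nat -> nat) : Prop :=
  forall i, i < N -> g i = f i.

Lemma agree_le N M g f : N <= M -> agree M g f -> agree N g f.
Proof. intros HNM Hg i Hi. apply Hg. lia. Qed.

Definition continuous_at {A : Type} (F : (nat -> nat) -> A) (f : nat -> nat) : Prop :=
  exists N, forall g, agree N g f -> F g = F f.

Lemma continuous_at_const {A : Type} (a : A) f :
  continuous_at (fun _ : nat -> nat => a) f.
Proof. exists 0. reflexivity. Qed.

Lemma continuous_at_apply n f : continuous_at (fun g => g n) f.
Proof. exists (S n). intros g Hg. apply Hg. lia. Qed.

Lemma continuous_at_map2 {A B C : Type} (h : A -> B -> C) F G f :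
  continuous_at F f -> continuous_at G f ->
  continuous_at (fun g => h (F g) (G g)) f.
Proof.
  intros [N1 HF] [N2 HG]. exists (max N1 N2). intros g Hg.
  rewrite HF, HG by (eapply agree_le; [|exact Hg]; lia). reflexivity.
Qed.

Lemma continuous_at_map {A B : Type} (h : A -> B) F f :
  continuous_at F f -> continuous_at (fun g => h (F g)) f.
Proof.
  intro HF. exact (continuous_at_map2 (fun a _ => h a) F F f HF HF).
Qed.

(* A continuous choice of an argument with discrete values may be frozen at its
   value for f. *)
Lemma continuous_at_dep {A B : Type} (K : (nat -> nat) -> B -> A) F f :
  continuous_at F f -> continuous_at (fun g => K g (F f)) f ->
  continuous_at (fun g => K g (F g)) f.
Proof.
  intros [N1 HF] [N2 HK]. exists (max N1 N2). intros g Hg.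
  rewrite HF by (eapply agree_le; [|exact Hg]; lia).
  apply HK. eapply agree_le; [|exact Hg]; lia.
Qed.

Lemma continuous_at_list {I A : Type} (H : (nat -> nat) -> I -> A) (l : list I) f :
  (forall i, In i l -> continuous_at (fun g => H g i) f) ->
  continuous_at (fun g => map (H g) l) f.
Proof.
  induction l as [|i l IH]; intro Hl; simpl.
  - apply continuous_at_const.
  - apply (continuous_at_map2 cons).
    + apply Hl. left. reflexivity.
    + apply IH. intros j Hj. apply Hl. right. exact Hj.
Qed.

Lemma continuous_at_fin {A : Type} :
  forall k (F : (nat -> nat) -> Fin.t k -> A) f,
  (forall i, continuous_at (fun g => F g i) f) -> continuous_at F f.
Proof.
  induction k as [|k IH]; intros F f HF.
  - exists 0. intros g _. apply functional_extensionality. intro i. inversion i.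
  - destruct (IH (fun g i => F g (Fin.FS i)) f) as [N1 H1]; [intro; apply HF|].
    destruct (HF Fin.F1) as [N2 H2].
    exists (max N1 N2). intros g Hg. apply functional_extensionality. intro i.
    apply (Fin.caseS' i (fun i => F g i = F f i)).
    + apply H2. eapply agree_le; [|exact Hg]; lia.
    + intro j. exact (f_equal (fun h => h j) (H1 g ltac:(eapply agree_le; [|exact Hg]; lia))).
Qed.

Section TermInd.
Variable P : term -> Prop.
Hypothesis P_var : forall v, P (tvar v).
Hypothesis P_const : forall n, P (tconst n).
Hypothesis P_fun : forall n w args, (forall i, P (args i)) -> P (tfun n w args).
Hypothesis P_G : forall G args, (forall t, In t args -> P t) -> P (tG G args).
Hypothesis P_f : forall u, P u -> P (tf u).
Hypothesis P_ell : forall G u x v, P u -> P v -> P (tell G u x v).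

Fixpoint term_ind_nested (t : term) : P t :=
  match t with
  | tvar v => P_var v
  | tconst n => P_const n
  | tfun n w args => P_fun n w args (fun i => term_ind_nested (args i))
  | tG G args =>
      P_G G args (proj1 (Forall_forall P args)
        ((fix go (l : list term) : Forall P l :=
            match l with
            | [] => Forall_nil _
            | t :: l' => Forall_cons t (term_ind_nested t) (go l')
            end) args))
  | tf u => P_f u (term_ind_nested u)
  | tell G u x v => P_ell G u x v (term_ind_nested u) (term_ind_nested v)
  end.
End TermInd.

Lemma eval_continuous t : forall s f, continuous_at (fun g => eval g s t) f.
Proof.
  induction t as [v|n|n w args IH|G args IH|u IH|G u x v IHu IHv]
    using term_ind_nested; intros s f; cbn [eval].
  - apply continuous_at_const.
  - apply continuous_at_const.
  - apply (continuous_at_map w), continuous_at_fin. intro i. apply IH.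
  - apply (continuous_at_map G), continuous_at_list. intros t Ht. apply IH, Ht.
  - apply (continuous_at_dep (fun g n => g n)); [apply IH | apply continuous_at_apply].
  - apply (continuous_at_dep
             (fun g n => G (map (fun i => eval g (upd s x i) u) (seq 0 (S n))))).
    + apply IHv.
    + apply (continuous_at_map G), continuous_at_list. intros i _. apply IHu.
Qed.

Lemma sat_qfree_continuous phi : qfree phi ->
  forall s f, continuous_at (fun g => sat g s phi) f.
Proof.
  induction phi as [n p args|t1 t2|a IH|a IHa b IHb|a IHa b IHb|a IHa b IHb|x a _|x a _];
    cbn [qfree sat]; intros Hq s f.
  - apply (continuous_at_map p), continuous_at_fin. intro i. apply eval_continuous.
  - apply (continuous_at_map2 eq); apply eval_continuous.
  - apply (continuous_at_map not), IH, Hq.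
  - apply (continuous_at_map2 and); [apply IHa | apply IHb]; apply Hq.
  - apply (continuous_at_map2 or); [apply IHa | apply IHb]; apply Hq.
  - apply (continuous_at_map2 (fun A B : Prop => A -> B)); [apply IHa | apply IHb]; apply Hq.
  - contradiction.
  - contradiction.
Qed.

Definition eventually (P : nat -> Prop) : Prop := exists N, forall n, N <= n -> P n.

Lemma eventually_ge c : eventually (fun n => c <= n).
Proof. exists c. auto. Qed.

Lemma eventually_and P Q : eventually P -> eventually Q -> eventually (fun n => P n /\ Q n).
Proof.
  intros [N1 HP] [N2 HQ]. exists (max N1 N2). intros n Hn. split.
  - apply HP. lia.
  - apply HQ. lia.
Qed.

Lemma eventually_forall_lt V (P : nat -> nat -> Prop) :
  (forall i, i < V -> eventually (P i)) -> eventually (fun n => forall i, i < V -> P i n).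
Proof.
  induction V as [|V IH]; intro HP.
  - exists 0. intros n _ i Hi. lia.
  - destruct (eventually_and _ _ (IH ltac:(auto)) (HP V ltac:(lia))) as [N HN].
    exists N. intros n Hn i Hi. destruct (HN n Hn) as [Hlt HV].
    destruct (Nat.eq_dec i V) as [->|Hne]; [exact HV | apply Hlt; lia].
Qed.

Definition extends (g : nat -> nat) (l : list nat) : Prop :=
  forall i, i < length l -> g i = nth i l 0.

Lemma length_prefix f n : length (prefix f n) = S n.
Proof. unfold prefix. rewrite length_map, length_seq. reflexivity. Qed.

Lemma extends_prefix g f n : extends g (prefix f n) <-> agree (S n) g f.
Proof.
  unfold extends, agree. rewrite length_prefix.
  assert (Hnth : forall i, i < S n -> nth i (prefix f n) 0 = f i).
  { intros i Hi. unfold prefix.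
    rewrite (nth_indep _ 0 (f 0)) by (rewrite length_map, length_seq; lia).
    rewrite map_nth, seq_nth by lia. reflexivity. }
  split; intros H i Hi; rewrite H, ?Hnth; auto.
Qed.

Section ClosedCover.
(* The closed sets C_c = {g | forall b, K c b g}, labelled by lab. *)
Variable K : nat -> nat -> (nat -> nat) -> Prop.
Variable lab : nat -> bool.
Hypothesis K_continuous : forall c b f, continuous_at (K c b) f.

Definition refutes (l : list nat) (c : nat) : Prop :=
  exists b, b <= length l /\ forall g, extends g l -> ~ K c b g.

Definition least_unrefuted (l : list nat) (c : nat) : Prop :=
  c <= length l /\ ~ refutes l c /\ forall c', c' < c -> refutes l c'.

Definition cover_guesser (l : list nat) : bool :=
  if excluded_middle_informative (exists c, least_unrefuted l c /\ lab c = true)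
  then true else false.

Lemma least_unrefuted_unique l c c' :
  least_unrefuted l c -> least_unrefuted l c' -> c = c'.
Proof.
  intros [_ [Hc Hlt]] [_ [Hc' Hlt']].
  destruct (lt_eq_lt_dec c c') as [[H|H]|H]; auto.
  - contradiction (Hc (Hlt' c H)).
  - contradiction (Hc' (Hlt c' H)).
Qed.

Lemma cover_guesser_least_unrefuted l c :
  least_unrefuted l c -> cover_guesser l = lab c.
Proof.
  intro Hc. unfold cover_guesser.
  destruct excluded_middle_informative as [[c' [Hc' Hlab]]|Hno].
  - rewrite (least_unrefuted_unique l c c' Hc Hc'). auto.
  - destruct (lab c) eqn:Hlab; auto. contradiction Hno. eauto.
Qed.

Lemma refutes_prefix_eventually f c :
  ~ (forall b, K c b f) -> eventually (fun n => refutes (prefix f n) c).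
Proof.
  intro Hc. apply not_all_ex_not in Hc as [b Hb].
  destruct (K_continuous c b f) as [N HN].
  exists (max N b). intros n Hn. exists b.
  split; [rewrite length_prefix; lia|].
  intros g Hg. apply (proj1 (extends_prefix g f n)) in Hg.
  rewrite HN; [exact Hb|]. eapply agree_le; [|exact Hg]. lia.
Qed.

Lemma not_refutes_prefix f c n : (forall b, K c b f) -> ~ refutes (prefix f n) c.
Proof.
  intros Hc [b [_ Hb]]. apply (Hb f); [apply (extends_prefix f f n); intros i _; reflexivity | apply Hc].
Qed.

Lemma least_unrefuted_prefix_eventually f c :
  (forall b, K c b f) -> (forall c', c' < c -> ~ forall b, K c' b f) ->
  eventually (fun n => least_unrefuted (prefix f n) c).
Proof.
  intros Hc Hmin.
  destruct (eventually_and _ _ (eventually_ge c)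
             (eventually_forall_lt c _ (fun c' Hc' =>
                refutes_prefix_eventually f c' (Hmin c' Hc')))) as [N HN].
  exists N. intros n Hn. destruct (HN n Hn) as [Hle Hlt].
  repeat split; auto.
  - rewrite length_prefix. lia.
  - apply not_refutes_prefix, Hc.
Qed.

Lemma guessable_of_closed_cover (S : (nat -> nat) -> Prop) :
  (forall f, exists c, forall b, K c b f) ->
  (forall f c, (forall b, K c b f) -> (lab c = true <-> S f)) ->
  guessable S.
Proof.
  intros Hcover Hlab. exists cover_guesser. intro f.
  destruct (dec_inh_nat_subset_has_unique_least_element (fun c => forall b, K c b f)
              (fun c => classic _) (Hcover f)) as [c [[Hc Hleast] _]].
  assert (Hmin : forall c', c' < c -> ~ forall b, K c' b f).
  { intros c' Hlt Hc'. specialize (Hleast c' Hc'). lia. }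
  destruct (least_unrefuted_prefix_eventually f c Hc Hmin) as [N HN].
  exists (N + 1). split; [lia|]. intros n Hn.
  rewrite (cover_guesser_least_unrefuted _ c) by (apply HN; lia).
  apply Hlab, Hc.
Qed.
End ClosedCover.

Lemma guessable_of_Sigma2_coSigma2 (S : (nat -> nat) -> Prop)
  (P Q : nat -> nat -> (nat -> nat) -> Prop) :
  (forall a b f, continuous_at (P a b) f) ->
  (forall a b f, continuous_at (Q a b) f) ->
  (forall f, S f <-> exists a, forall b, P a b f) ->
  (forall f, ~ S f <-> exists a, forall b, Q a b f) ->
  guessable S.
Proof.
  intros HPc HQc HS HnS.
  set (K c b g := if Nat.even c then P (Nat.div2 c) b g else Q (Nat.div2 c) b g).
  apply (guessable_of_closed_cover K Nat.even).
  - intros c b f. unfold K. destruct (Nat.even c); auto.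
  - intro f. destruct (classic (S f)) as [Hf|Hf].
    + apply HS in Hf as [a Ha]. exists (2 * a). intro b. unfold K.
      rewrite Nat.even_even, Nat.div2_double. apply Ha.
    + apply HnS in Hf as [a Ha]. exists (2 * a + 1). intro b. unfold K.
      rewrite Nat.even_add, Nat.even_even, Nat.div2_odd'. apply Ha.
  - intros f c Hc. unfold K in Hc. destruct (Nat.even c).
    + split; [intros _ | reflexivity]. apply HS. eauto.
    + split; [discriminate|]. intro Hf. exfalso. apply (proj2 (HnS f)); eauto.
Qed.

Theorem mainTheorem8 (S : (nat -> nat) -> Prop)
  (x y : var) (phi : formula) (x' y' : var) (psi : formula) :
  qfree phi -> qfree psi ->
  defines (fall x (fex y phi)) S ->
  defines (fex x' (fall y' psi)) S ->
  guessable S.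
Proof.
  intros Hphi Hpsi [_ Hforall] [_ Hexists].
  apply (guessable_of_Sigma2_coSigma2 S
           (fun a b g => sat g (upd (upd (fun _ => 0) x' a) y' b) psi)
           (fun a b g => ~ sat g (upd (upd (fun _ => 0) x a) y b) phi)).
  - intros a b f. apply sat_qfree_continuous, Hpsi.
  - intros a b f. apply (continuous_at_map not), sat_qfree_continuous, Hphi.
  - intro f. rewrite <- Hexists. reflexivity.
  - intro f. rewrite <- Hforall. unfold models. cbn [sat]. split.
    + intro Hf. apply not_all_ex_not in Hf as [a Ha].
      exists a. apply not_ex_all_not, Ha.
    + intros [a Ha] Hf. destruct (Hf a) as [b Hb]. exact (Ha b Hb).
Qed.
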